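(* Let $r\ge2$, $m>1$ and $1\le t\le 2^m-1$ be integers, and let $\mathcal C$ be a binary linear code with coordinates indexed by $\Omega_t^{(m)}$ such that every row of $H_t^{(m)}$ lies in the dual code $\mathcal C^\perp$. Let $m_0\in[m]$ satisfy $2^{m_0-1}-1<t\le2^{m_0}-1$, and set $t_1=2^{m_0-1}-1$, $t_2=t-t_1-1$, $A=\Omega_{t_1}^{(m)}$, $B=\Omega_t^{(m)}\setminus A$, and for $j\in\mathbb Z_r$, $A_j=\{(i_m,\dots,i_1)\in A: i_{m_0}=j\}$. For $j\in\mathbb Z_{r+1}$ let $\psi_j:\mathbb Z_{r+1}^{m-1}\to\mathbb Z_{r+1}^m$ insert $j$ as the new $m_0$-th coordinate from the right, i.e. $\psi_j(i_{m-1},\dots,i_{m_0},i_{m_0-1},\dots,i_1)=(i_{m-1},\dots,i_{m_0},j,i_{m_0-1},\dots,i_1)$. Then: 1) for each $j\in\mathbb Z_r$, $\psi_j$ restricts to a bijection $\Omega_{t_1}^{(m-1)}\to A_j$, and for every codeword $x\in\mathcal C$ and every $\alpha\in\Omega_{t_1}^{(m-1)}\setminus\Omega_0^{(m-1)}$, $x_{\psi_j(\alpha)}=\sum_{\beta\in\mathcal L^{(m-1)}(\alpha)}x_{\psi_j(\beta)}$ (i.e. the punctured code $\mathcal C|_{A_j}$, re-indexed via $\psi_j$, has a parity-check matrix containing all rows of $H_{t_1}^{(m-1)}$); 2) if $t_2\ge1$, $\psi_r$ restricts to a bijection $\Omega_{t_2}^{(m-1)}\to B$, and for every $x\in\mathcal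 C$ and every $\alpha\in\Omega_{t_2}^{(m-1)}\setminus\Omega_0^{(m-1)}$, $x_{\psi_r(\alpha)}=\sum_{\beta\in\mathcal L^{(m-1)}(\alpha)}x_{\psi_r(\beta)}$ (i.e. $\mathcal C|_B$, re-indexed via $\psi_r$, has a parity-check matrix containing all rows of $H_{t_2}^{(m-1)}$).
   Context: For any $m'\ge1$: $\mathbb Z_r=\{0,\dots,r-1\}\subseteq\mathbb Z_{r+1}=\{0,\dots,r\}$ as sets; elements of $\mathbb Z_{r+1}^{m'}$ are written $\alpha=(i_{m'},\dots,i_1)$, $i_\ell$ being the $\ell$-th coordinate from the right. $\mathbf U^{(m')}(\alpha)=\{\ell: i_\ell=r\}$, $\mathbf T^{(m')}(\alpha)=\{\ell: i_\ell\in\mathbb Z_r\}$, $\mathcal L^{(m')}(\alpha)=\{(j_{m'},\dots,j_1)\in\mathbb Z_r^{m'}: j_\ell=i_\ell\ \forall\ell\in\mathbf T^{(m')}(\alpha)\}$. For $0\le s\le2^{m'}-1$ with binary expansion $s=\sum_\ell\lambda_\ell2^{\ell-1}$, $\mathrm{supp}_{m'}(s)=\{\ell:\lambda_\ell=1\}$; $\Gamma_s^{(m')}=\{\alpha\in\mathbb Z_{r+1}^{m'}:\mathbf U^{(m')}(\alpha)=\mathrm{supp}_{m'}(s)\}$ and $\Omega_s^{(m')}=\bigcup_{\ell=0}^s\Gamma_\ell^{(m')}$. $H_t^{(m')}$ is the binary matrix with rows indexed by $\Omega_t^{(m')}\setminus\Omega_0^{(m')}$, columns by $\Omega_t^{(m')}$,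 entry $(\alpha,\beta)$ equal to $1$ iff $\beta\in\mathcal L^{(m')}(\alpha)\cup\{\alpha\}$. Equivalently, all rows of $H_t^{(m')}$ lie in $\mathcal C^\perp$ iff $x_\alpha=\sum_{\beta\in\mathcal L^{(m')}(\alpha)}x_\beta$ for all $x\in\mathcal C$ and all $\alpha\in\Omega_t^{(m')}\setminus\Omega_0^{(m')}$. *)

From HB Require Import structures.
From mathcomp Require Import all_boot all_order all_algebra.
Set Implicit Arguments. Unset Strict Implicit. Unset Printing Implicit Defensive.
Import GRing.Theory.
Local Open Scope ring_scope.

(* Conventions: an element (i_m,...,i_1) of Z_{r+1}^m is a finite function
   a : 'I_m -> 'I_(r.+1), where the 1-based coordinate l (from the right)
   is stored at the ordinal l-1.  Z_r is the subset {0,...,r-1} of 'I_(r.+1);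
   the value r is ord_max. *)
Definition Zm (m r : nat) := {ffun 'I_m -> 'I_r.+1}.

Definition Uset m r (a : Zm m r) : {set 'I_m} := [set i | a i == ord_max].
Definition Tset m r (a : Zm m r) : {set 'I_m} := [set i | a i != ord_max].
Definition Lset m r (a : Zm m r) : {set Zm m r} :=
  [set b : Zm m r | [forall i, b i != ord_max] && [forall i, (i \in Tset a) ==> (b i == a i)]].
Definition supp m (s : nat) : {set 'I_m} := [set i : 'I_m | odd (s %/ 2 ^ i)].
Definition Gamma m r (s : nat) : {set Zm m r} := [set a : Zm m r | Uset a == supp m s].
Definition Omega m r (s : nat) : {set Zm m r} := \bigcup_(l < s.+1) Gamma m r l.

Definition Idx m r t := {a : Zm m r | a \in Omega m r t}.
Definition word m r t := {ffun Idx m r t -> 'F_2}.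

(* the coordinate x_alpha of a word (0 if alpha is not a coordinate) *)
Definition xat m r t (x : word m r t) (a : Zm m r) : 'F_2 :=
  if @insub _ (fun a => a \in Omega m r t) (Idx m r t) a is Some i then x i else 0.

Definition Hentry m r (a b : Zm m r) : 'F_2 := (b \in Lset a :|: [set a])%:R.

Definition psi m r (m0 : nat) (j : 'I_r.+1) (a : Zm m.-1 r) : Zm m r :=
  [ffun i : 'I_m => if val i == m0.-1 then j else
     if @insub _ (fun k => k < m.-1)%N 'I_m.-1 (unbump m0.-1 i) is Some k
     then a k else j].

Definition Aj m r (m0 t1 : nat) (j : 'I_r.+1) : {set Zm m r} :=
  [set a in Omega m r t1 | [exists i : 'I_m, (val i == m0.-1) && (a i == j)]].

(* Inserting the coordinate j at position m0 inserts the bit [j == r] at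
   position m0 into the binary index s of Gamma_s: psi_j keeps every index
   s < 2^(m0-1) for j < r, while psi_r adds 2^(m0-1) to it.  This identifies
   Omega_t1 with each A_j and Omega_t2 with B.  On the L-sets,
   L(psi_j a) = psi_j (L a) for j < r, and L(psi_r a) is the disjoint union of
   the psi_j (L a), j < r.  Part 1 is thus the check equation at psi_j a read
   back through psi_j.  For part 2, expanding x at psi_r a gives the double sum
   of x(psi_j b) over j < r and b in L a, and for each b (which has no
   coordinate r) the check equation at psi_r b folds the sum over j back into
   x(psi_r b). *)
From HB Require Import structures.
From mathcomp Require Import all_boot all_order all_algebra zify.
Set Implicit Arguments.
Unset Strict Implicit.
Unset Printing Implicit Defensive.
Import GRing.Theory.
Local Open Scope ring_scope.

Lemma forall_lift n (i0 : 'I_n.+1) (P : pred 'I_n.+1) :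
  [forall i, P i] = P i0 && [forall k, P (lift i0 k)].
Proof.
apply/forallP/andP => [P_all|[P0 /forallP P_lift] i].
  by split; [|apply/forallP].
by case: (unliftP i0 i) => [k ->|->].
Qed.

Section OmegaTheory.
Variables m r : nat.
Implicit Types (a b : Zm m r) (s : nat).

Lemma OmegaP s a :
  reflect (exists2 l, (l <= s)%N & Uset a = supp m l) (a \in Omega m r s).
Proof.
apply: (iffP bigcupP) => [[l _]|[l ls Ua]].
  by rewrite inE => /eqP Ua; exists l; rewrite // -ltnS.
by exists (Ordinal (ls : (l < s.+1)%N)); rewrite // inE Ua.
Qed.

Lemma Omega_mono s s' a :
  (s <= s')%N -> a \in Omega m r s -> a \in Omega m r s'.
Proof.
by move=> ss' /OmegaP[l ls Ua]; apply/OmegaP; exists l; rewrite ?(leq_trans ls).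
Qed.

Lemma Omega0P a : (a \in Omega m r 0) = [forall i, a i != ord_max].
Proof.
apply/OmegaP/forallP => [[l]|a_lt].
  by rewrite leqn0 => /eqP-> /setP Ua i; have := Ua i; rewrite !inE div0n => ->.
by exists 0%N => //; apply/setP => i; rewrite !inE div0n; apply/negbTE.
Qed.

Lemma Lset_sub_Omega0 a b : b \in Lset a -> b \in Omega m r 0.
Proof. by rewrite Omega0P inE => /andP[]. Qed.

Lemma Lset_Omega0 b : b \in Omega m r 0 -> Lset b = [set b].
Proof.
rewrite Omega0P => /forallP b_lt; apply/setP => c; rewrite !inE.
apply/andP/eqP => [[_ /forallP c_eq]|->].
  by apply/ffunP => i; apply/eqP; have := c_eq i; rewrite inE b_lt.
by split; apply/forallP => i; rewrite ?b_lt ?eqxx ?implybT.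
Qed.

End OmegaTheory.

(* Over 'F_2 a row of H_t with [a] outside Omega_0 reads [x_a + sum_(L a) x = 0];
   coordinates outside Omega_t contribute nothing since [xat] is 0 there. *)
Lemma xat_eq_sum_Lset m r t (x : word m r t) (a : Zm m r) :
  a \notin Omega m r 0 -> \sum_(b : Idx m r t) Hentry a (val b) * x b = 0 ->
  xat x a = \sum_(c in Lset a) xat x c.
Proof.
move=> a_out.
have -> : \sum_(b : Idx m r t) Hentry a (val b) * x b =
          \sum_(c in Lset a :|: [set a]) xat x c.
  transitivity (\sum_(c in Omega m r t) Hentry a c * xat x c).
    by rewrite [RHS]big_sub; apply: eq_bigr => b _; rewrite /xat valK.
  rewrite big_mkcond [RHS]big_mkcond; apply: eq_bigr => c _.
  rewrite /Hentry; case: ifP => cO; case: ifP => cL; rewrite ?mul1r ?mul0r //.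
  by rewrite /xat insubF.
rewrite setUC big_setU1 /=; last by apply: contra a_out; apply: Lset_sub_Omega0.
by move/eqP; rewrite addr_eq0 => /eqP->; rewrite oppr_pchar2 // pchar_Fp.
Qed.

Lemma exp2_pred_lt p : (2 ^ p - 1 < 2 ^ p.+1)%N.
Proof. by rewrite (leq_ltn_trans (leq_subr 1 _)) // ltn_exp2l. Qed.

Section InsertCoordinate.
Variables n r p : nat.
Hypothesis p_le_n : (p <= n)%N.
Local Notation pivot := (inord p : 'I_n.+1).
Local Notation psi := (@psi n.+1 r p.+1).
Implicit Types (j : 'I_r.+1) (a b : Zm n r) (c : Zm n.+1 r).

Lemma val_pivot : nat_of_ord pivot = p.
Proof. by rewrite inordK. Qed.

Definition drop_pivot (c : Zm n.+1 r) : Zm n r := [ffun k => c (lift pivot k)].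

Lemma psi_pivot j a : psi j a pivot = j.
Proof. by rewrite ffunE /= val_pivot eqxx. Qed.

Lemma psi_lift j a k : psi j a (lift pivot k) = a k.
Proof.
rewrite ffunE /= val_pivot eq_sym (negbTE (neq_bump _ _)) bumpK.
by rewrite insubT ?ltn_ord //= => ?; congr (a _); apply: val_inj.
Qed.

Lemma drop_pivotK c : psi (c pivot) (drop_pivot c) = c.
Proof.
apply/ffunP => i; case: (unliftP pivot i) => [k ->|->]; last by rewrite psi_pivot.
by rewrite psi_lift ffunE.
Qed.

Lemma psiK j : cancel (psi j) drop_pivot.
Proof. by move=> a; apply/ffunP => k; rewrite ffunE psi_lift. Qed.

Lemma psi_inj j : injective (psi j).
Proof. exact: can_inj (psiK j). Qed.

Lemma mem_imset_psi j (S : {set Zm n r}) c :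
  (c \in psi j @: S) = (c pivot == j) && (drop_pivot c \in S).
Proof.
apply/imsetP/andP => [[a aS ->]|[/eqP cj cS]]; first by rewrite psi_pivot psiK.
by exists (drop_pivot c); rewrite // -cj drop_pivotK.
Qed.

Lemma mem_Lset_psi j a c :
  (c \in Lset (psi j a)) =
  [&& c pivot != ord_max, (j != ord_max) ==> (c pivot == j) & drop_pivot c \in Lset a].
Proof.
rewrite !inE (forall_lift pivot) (forall_lift pivot (fun i => _ ==> _)) !inE.
have -> : [forall k, drop_pivot c k != ord_max] =
          [forall k, c (lift pivot k) != ord_max].
  by apply: eq_forallb => k; rewrite ffunE.
have -> : [forall k, (k \in Tset a) ==> (drop_pivot c k == a k)] =
          [forall k, (lift pivot k \in Tset (psi j a)) ==>
                     (c (lift pivot k) == psi j a (lift pivot k))].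
  by apply: eq_forallb => k; rewrite !inE psi_lift ffunE.
by rewrite psi_pivot; do 2 case: [forall _, _]; rewrite ?andbT ?andbF ?andbA.
Qed.

Lemma Lset_psi j a : j != ord_max -> Lset (psi j a) = psi j @: Lset a.
Proof.
move=> jr; apply/setP => c; rewrite mem_Lset_psi mem_imset_psi jr /=.
by case: (c pivot =P j) => [->|_]; rewrite ?jr ?andbF.
Qed.

Lemma sum_Lset_psi_max (V : nmodType) (F : Zm n.+1 r -> V) a :
  \sum_(c in Lset (psi ord_max a)) F c =
  \sum_(j | j != ord_max) \sum_(b in Lset a) F (psi j b).
Proof.
rewrite (partition_big (fun c => c pivot) (fun j => j != ord_max)) /=; last first.
  by move=> c; rewrite mem_Lset_psi => /andP[].
apply: eq_bigr => j jr; rewrite -(big_imset _ (in2W (@psi_inj j))) /=.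
apply: eq_bigl => c; rewrite mem_Lset_psi mem_imset_psi eqxx /=.
by case: (c pivot =P j) => [->|_]; rewrite ?jr ?andbT ?andbF.
Qed.

Lemma supp_pivot (b : bool) l :
  (l < 2 ^ p)%N -> (pivot \in supp n.+1 (b * 2 ^ p + l)%N) = b.
Proof.
move=> lp; rewrite inE val_pivot divnDl ?dvdn_mull // (divn_small lp) addn0.
by rewrite mulnK ?expn_gt0 //; case: b.
Qed.

Lemma supp_lift (b : bool) l (k : 'I_n) :
  (l < 2 ^ p)%N -> (lift pivot k \in supp n.+1 (b * 2 ^ p + l)%N) = (k \in supp n l).
Proof.
move=> lp; rewrite !inE /= val_pivot /bump; case: leqP => [pk|kp].
  have pk' : (2 ^ p <= 2 ^ k)%N by rewrite leq_exp2l.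
  by rewrite add1n expnS !divn_small //; lia.
rewrite add0n divnDl; last by rewrite dvdn_mull // dvdn_exp2l // ltnW.
rewrite oddD -(subnK (ltnW kp)) expnD mulnA mulnK ?expn_gt0 // oddM oddX.
by rewrite subn_eq0 leqNgt kp andbF.
Qed.

Lemma Uset_psi_supp j a (b : bool) l : (l < 2 ^ p)%N ->
  (Uset (psi j a) == supp n.+1 (b * 2 ^ p + l)%N) =
  (b == (j == ord_max)) && (Uset a == supp n l).
Proof.
move=> lp; apply/eqP/andP => [/setP Ua|[/eqP-> /eqP Ua]].
  split; first by have := Ua pivot; rewrite inE psi_pivot supp_pivot // => ->.
  by apply/eqP/setP => k; have := Ua (lift pivot k); rewrite supp_lift // !inE psi_lift.
apply/setP => i; case: (unliftP pivot i) => [k ->|->].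
  by rewrite supp_lift // -Ua !inE psi_lift.
by rewrite supp_pivot // inE psi_pivot.
Qed.

Lemma mem_Omega_psi j a s : (s < 2 ^ p.+1)%N ->
  (psi j a \in Omega n.+1 r s) =
  ((j == ord_max) * 2 ^ p <= s)%N &&
  (a \in Omega n r (minn (s - (j == ord_max) * 2 ^ p) (2 ^ p - 1))).
Proof.
rewrite expnS => s_lt; have P_gt0 : (0 < 2 ^ p)%N by rewrite expn_gt0.
apply/OmegaP/andP => [[l ls /eqP Ul]|[js /OmegaP[l ls /eqP Ua]]].
  have [b [l' [l_eq l'_lt]]] :
      exists (b : bool) l', (l = b * 2 ^ p + l')%N /\ (l' < 2 ^ p)%N.
    by case: (leqP (2 ^ p) l) => lP; [exists true, (l - 2 ^ p)%N|exists false, l]; lia.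
  rewrite l_eq Uset_psi_supp // in Ul; case/andP: Ul => /eqP bj Ua.
  split; first by rewrite -bj; lia.
  by apply/OmegaP; exists l'; [lia|apply/eqP].
exists ((j == ord_max) * 2 ^ p + l)%N; first lia.
by apply/eqP; rewrite Uset_psi_supp ?eqxx //; lia.
Qed.

Lemma mem_Omega_psi_Zr j a s : j != ord_max -> (s < 2 ^ p.+1)%N ->
  (psi j a \in Omega n.+1 r s) = (a \in Omega n r (minn s (2 ^ p - 1))).
Proof. by move=> jr s_lt; rewrite mem_Omega_psi // (negbTE jr) mul0n subn0. Qed.

Lemma mem_Omega_psi_max a s : (s < 2 ^ p.+1)%N ->
  (psi ord_max a \in Omega n.+1 r s) =
  (2 ^ p <= s)%N && (a \in Omega n r (s - 2 ^ p)).
Proof.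
move=> s_lt; rewrite mem_Omega_psi // eqxx mul1n.
by case: leqP => // ps; rewrite (minn_idPl _) //; rewrite expnS in s_lt; lia.
Qed.

Lemma imset_psi_Zr j : j != ord_max ->
  psi j @: Omega n r (2 ^ p - 1) = @Aj n.+1 r p.+1 (2 ^ p - 1) j.
Proof.
move=> jr; apply/setP => c; rewrite mem_imset_psi !inE.
have -> : [exists i, (val i == p.+1.-1) && (c i == j)] = (c pivot == j).
  apply/existsP/eqP => [[i /andP[/eqP ip /eqP <-]]|<-].
    by congr (c _); apply: val_inj; rewrite /= val_pivot.
  by exists pivot; rewrite /= val_pivot !eqxx.
case: (c pivot =P j) => [cj|_]; rewrite ?andbF //=.
by rewrite -{2}(drop_pivotK c) cj mem_Omega_psi_Zr ?minnn ?andbT ?exp2_pred_lt.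
Qed.

Lemma imset_psi_max t : (2 ^ p <= t < 2 ^ p.+1)%N ->
  psi ord_max @: Omega n r (t - 2 ^ p) =
  Omega n.+1 r t :\: Omega n.+1 r (2 ^ p - 1).
Proof.
move=> /andP[pt t_lt]; have t1_lt := exp2_pred_lt p.
apply/setP => c; rewrite mem_imset_psi inE.
case: (eqVneq (c pivot) ord_max) => [c_max|c_Zr] /=.
  rewrite -(drop_pivotK c) psiK c_max !mem_Omega_psi_max // pt /=.
  by rewrite leqNgt ltn_subrL expn_gt0.
rewrite -(drop_pivotK c) !mem_Omega_psi_Zr // minnn (minn_idPr _) ?andNb //.
by rewrite expnS in t_lt; lia.
Qed.

Variables (V : nmodType) (f : Zm n.+1 r -> V) (t : nat).
Hypothesis f_check : forall c, c \in Omega n.+1 r t :\: Omega n.+1 r 0 ->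
  f c = \sum_(d in Lset c) f d.

Lemma check_psi_Zr j a : j != ord_max -> (2 ^ p - 1 <= t)%N ->
  a \in Omega n r (2 ^ p - 1) :\: Omega n r 0 ->
  f (psi j a) = \sum_(b in Lset a) f (psi j b).
Proof.
move=> jr t1t /setDP[aO a0]; have t1_lt := exp2_pred_lt p.
rewrite f_check; last first.
  rewrite inE mem_Omega_psi_Zr ?expn_gt0 // min0n a0 /=.
  by apply: Omega_mono t1t _; rewrite mem_Omega_psi_Zr // minnn.
by rewrite Lset_psi // big_imset //; apply: in2W; apply: psi_inj.
Qed.

Lemma check_psi_max a : (2 ^ p <= t < 2 ^ p.+1)%N ->
  a \in Omega n r (t - 2 ^ p) :\: Omega n r 0 ->
  f (psi ord_max a) = \sum_(b in Lset a) f (psi ord_max b).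
Proof.
move=> /andP[pt t_lt] /setDP[aO _].
have psi_max_checked b : b \in Omega n r (t - 2 ^ p) ->
    psi ord_max b \in Omega n.+1 r t :\: Omega n.+1 r 0.
  by move=> bO; rewrite inE !mem_Omega_psi_max ?expn_gt0 // pt bO leqn0 expn_eq0.
have f_psi_max b : b \in Omega n r 0 ->
    f (psi ord_max b) = \sum_(j | j != ord_max) f (psi j b).
  move=> b0; rewrite f_check ?psi_max_checked ?(Omega_mono (leq0n _) b0) //.
  by rewrite sum_Lset_psi_max Lset_Omega0 //; apply: eq_bigr => j _; rewrite big_set1.
rewrite f_check ?psi_max_checked // sum_Lset_psi_max exchange_big /=.
by apply: eq_bigr => b bL; rewrite f_psi_max // (Lset_sub_Omega0 bL).
Qed.

End InsertCoordinate.

Theorem lemma7 (r m t m0 : nat) (C : {set word m r t})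
  (hr : (2 <= r)%N) (hm : (1 < m)%N) (ht1 : (1 <= t)%N) (ht2 : (t <= 2 ^ m - 1)%N)
  (hC0 : 0 \in C) (hCD : forall x y, x \in C -> y \in C -> x + y \in C)
  (hH : forall a : Zm m r, a \in Omega m r t :\: Omega m r 0 ->
        forall x, x \in C -> \sum_(b : Idx m r t) Hentry a (val b) * x b = 0)
  (hm0 : (1 <= m0 <= m)%N)
  (hm0t : (2 ^ m0.-1 - 1 < t <= 2 ^ m0 - 1)%N) :
  let t1 := (2 ^ m0.-1 - 1)%N in
  let t2 := (t - t1 - 1)%N in
  let B := Omega m r t :\: Omega m r t1 in
  (forall j : 'I_r.+1, j != ord_max ->
     {in Omega m.-1 r t1 &, injective (@psi m r m0 j)} /\
     @psi m r m0 j @: Omega m.-1 r t1 = @Aj m r m0 t1 j /\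
     (forall x, x \in C -> forall a, a \in Omega m.-1 r t1 :\: Omega m.-1 r 0 ->
        xat x (@psi m r m0 j a) = \sum_(b in Lset a) xat x (@psi m r m0 j b))) /\
  ((1 <= t2)%N ->
     {in Omega m.-1 r t2 &, injective (@psi m r m0 ord_max)} /\
     @psi m r m0 ord_max @: Omega m.-1 r t2 = B /\
     (forall x, x \in C -> forall a, a \in Omega m.-1 r t2 :\: Omega m.-1 r 0 ->
        xat x (@psi m r m0 ord_max a) = \sum_(b in Lset a) xat x (@psi m r m0 ord_max b))).
Proof.
move=> t1 t2 B; rewrite {}/B {}/t2 {}/t1.
case: m C hC0 hCD hm ht2 hH hm0 hm0t => [//|n] C _ _ _ _ hH hm0 hm0t.
case: m0 hm0 hm0t => [/andP[]//|p] /andP[_]; rewrite ltnS => p_le_n /= hm0t.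
have checked x : x \in C -> forall a, a \in Omega n.+1 r t :\: Omega n.+1 r 0 ->
    xat x a = \sum_(c in Lset a) xat x c.
  by move=> xC a aO; apply: xat_eq_sum_Lset (hH a aO x xC); case/setDP: aO.
split=> [j jr|_].
  split; first by move=> a b _ _; exact: psi_inj p_le_n j a b.
  split; first exact: imset_psi_Zr p_le_n j jr.
  move=> x xC a; apply: (check_psi_Zr (f := xat x) p_le_n (checked x xC) jr).
  by lia.
have t_range : (2 ^ p <= t < 2 ^ p.+1)%N by rewrite expnS in hm0t *; lia.
have -> : (t - (2 ^ p - 1) - 1 = t - 2 ^ p)%N by lia.
split; first by move=> a b _ _; exact: psi_inj p_le_n ord_max a b.
split; first exact: imset_psi_max p_le_n t t_range.
by move=> x xC a; apply: (check_psi_max (f := xat x) p_le_n (checked x xC) t_range).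
Qed.
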